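(* Let $f,g:\{0,\dots,r-1\}^n\to\mathbb{R}$ be $r$-valued fitness functions such that the first position of $f$ weakly prefers the value $r-1$ and the first position of $g$ is neutral. Let $p$ and $q$ be the frequency matrices of the $r$-cGA optimizing $f$ and $g$, respectively. Then for all $t\in\mathbb{N}$, $p^{(t)}_{1,r-1}$ stochastically dominates $q^{(t)}_{1,r-1}$.
   Context: Let $n\geq 1$, $r\geq 2$ be integers and $K>0$. The $r$-cGA maximizing a function $h$ maintains frequencies $p^{(t)}_{i,j}$ ($i\in\{1,\dots,n\}$, $j\in\{0,\dots,r-1\}$), initialized to $1/r$. In iteration $t$ it samples $x,y\in\{0,\dots,r-1\}^n$ independently, each position $i$ independently with $\Pr[x_i=j]=p^{(t)}_{i,j}$; if $h(x)<h(y)$ it swaps $x$ and $y$; then it sets $p^{(t+1)}_{i,j}=p^{(t)}_{i,j}+\frac1K(\mathbf{1}[x_i=j]-\mathbf{1}[y_i=j])$ for all $i,j$, with no margins. It is assumed (well-behaved frequency assumption) that $1/r$ is an integer multiple of $1/K$, so frequencies lie in $\{0,1/K,\dots,1\}$. A position $i$ is neutral for $h$ if $h(x)=h(x')$ whenever $x,x'$ agree outside position $i$. The function $f$ weakly prefers value $j$ at position $i$ if for all $x\in\{0,\dots,r-1\}^n$, $f(x_1,\dots,x_{i-1},x_i,x_{i+1},\dots,x_n)\leq f(x_1,\dots,x_{i-1},j,x_{i+1},\dots,x_n)$. A random variable $Z$ stochastically dominates $Y$ if $\Pr[Z\leq\lambda]\leq\Pr[Y\leq\lambda]$ for all $\lambda\in\mathbb{R}$.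 *)

From HB Require Import structures.
From mathcomp Require Import all_boot all_order all_algebra.
From mathcomp Require Import reals.
Set Implicit Arguments. Unset Strict Implicit. Unset Printing Implicit Defensive.
Import Order.TTheory GRing.Theory Num.Theory.
Local Open Scope ring_scope.

Section RcGA.
Variable R : realType.
Variables n r : nat.

Definition point := {ffun 'I_n -> 'I_r}.
Definition freq := 'I_n -> 'I_r -> R.

Definition sample_prob (p : freq) (x : point) : R := \prod_(i < n) p i (x i).

Definition cga_update (K : R) (h : point -> R) (p : freq) (x y : point) : freq :=
  let wl := if h x < h y then (y, x) else (x, y) in
  fun i j => p i j + K^-1 * ((wl.1 i == j)%:R - (wl.2 i == j)%:R).

Definition init_freq : freq := fun _ _ => (r%:R)^-1.

(* exact distribution of the frequency matrix at iteration t, as a finite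
   list of (probability weight, frequency matrix) *)
Fixpoint cga_dist (K : R) (h : point -> R) (t : nat) : seq (R * freq) :=
  match t with
  | 0 => [:: (1, init_freq)]
  | t'.+1 =>
      flatten [seq [seq (wp.1 * (sample_prob wp.2 xy.1 * sample_prob wp.2 xy.2),
                          cga_update K h wp.2 xy.1 xy.2)
                   | xy <- enum {: point * point}]
              | wp <- cga_dist K h t']
  end.

Definition cga_prob_le (K : R) (h : point -> R) (t : nat) (i : 'I_n) (j : 'I_r)
  (lam : R) : R :=
  \sum_(wp <- cga_dist K h t | wp.2 i j <= lam) wp.1.

Definition neutral (h : point -> R) (i : 'I_n) : Prop :=
  forall x x' : point, (forall k, k != i -> x k = x' k) -> h x = h x'.

Definition weakly_prefers (h : point -> R) (i : 'I_n) (j : 'I_r) : Prop :=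
  forall x : point, h x <= h [ffun k => if k == i then j else x k].

End RcGA.

Definition stoch_dominates_freq (R : realType) (n r : nat) (K : R)
  (hZ hY : point n r -> R) (t : nat) (i : 'I_n) (j : 'I_r) : Prop :=
  forall lam : R, cga_prob_le K hZ t i j lam <= cga_prob_le K hY t i j lam.

From mathcomp Require Import all_boot all_order all_algebra.
From mathcomp Require Import reals.
From mathcomp Require Import ring lra.
Set Implicit Arguments. Unset Strict Implicit. Unset Printing Implicit Defensive.
Import Order.TTheory GRing.Theory Num.Theory.
Local Open Scope ring_scope.

(* Write v for the frequency p_{i,j} and compare the two runs through test
   functions phi that are nonincreasing along the grid (1/K)N: by induction on t,
   E phi(p^(t)) <= E phi(q^(t)) for every such phi. In one step v moves by D/K
   with D in {-1,0,1} and E[D^2] = 2v(1-v) whatever the fitness, so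
   E phi(v + D/K) = T phi(v) + E[D] (phi(v + 1/K) - phi(v - 1/K)) / 2, where
   T phi is the expectation for a neutral position. Averaging D over the order
   of the two samples gives a score in which ties count 0. Exchanging the entries at
   position i of the two samples preserves their joint probability; for a
   neutral position it flips the sign of that score, so E[D] = 0, and when j is
   weakly preferred it can only help the sample holding j, so E[D] >= 0. Hence the
   f-step is below T phi(v) and the g-step equals it, and T phi is again
   nonincreasing on the grid because v(1-v) <= 1/4. Indicators of [v <= lam]
   are such test functions. *)

Lemma ler_sgr (R : realDomainType) : {homo (@Num.sg R) : x y / x <= y}.
Proof.
move=> x y le_xy; case: sgrP le_xy => hx; case: sgrP => hy //= le_xy; lra.
Qed.

Lemma sum_involutive_weighted (R : pzSemiRingType) (T : finType) (s : T -> T)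
    (w F : T -> R) :
  involutive s -> (forall x, w (s x) = w x) ->
  \sum_x w x * F (s x) = \sum_x w x * F x.
Proof.
move=> sK ws; rewrite [RHS](reindex_inj (can_inj sK)).
by apply: eq_bigr => x _; rewrite ws.
Qed.

Lemma sum_indicator (R : pzSemiRingType) (T : finType) (c : T) :
  \sum_k ((c == k)%:R : R) = 1.
Proof.
by rewrite (bigD1 c) //= eqxx big1 ?addr0 // => k; rewrite eq_sym => /negbTE ->.
Qed.

Lemma sum_pair_mul (R : pzSemiRingType) (T U : finType) (F : T -> R)
    (G : U -> R) :
  \sum_(xy : T * U) F xy.1 * G xy.2 = (\sum_x F x) * (\sum_y G y).
Proof. by rewrite big_distrlr pair_big. Qed.

Lemma shift_by_sign (R : comPzRingType) (phi : R -> R) (v d e : R) :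
  e = 0 \/ e = 1 \/ e = -1 ->
  2 * phi (v + d * e) = 2 * phi v + e * (phi (v + d) - phi (v - d))
    + e ^+ 2 * (phi (v + d) + phi (v - d) - 2 * phi v).
Proof. by case=> [->|[->|->]]; rewrite ?mulr0 ?addr0 ?mulr1 ?mulrN1; ring. Qed.

Lemma natr_eq_of_inv_eq_div (R : numFieldType) (K : R) (r m : nat) :
  (0 < r)%N -> K != 0 -> (r%:R)^-1 = m%:R / K -> K = (m * r)%:R.
Proof.
move=> r_gt0 K_neq0 rE; have r_neq0 : r%:R != 0 :> R by rewrite pnatr_eq0 -lt0n.
by rewrite natrM -[m%:R](mulfVK K_neq0) -rE mulrAC mulVf // mul1r.
Qed.

Section OnePosition.
Variables (R : realType) (n r : nat) (i : 'I_n) (j : 'I_r).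
Local Notation pt := (point n r).
Local Notation fr := (freq R n r).
Implicit Types (p : fr) (x y : pt) (xy : pt * pt) (f g h : pt -> R) (phi : R -> R).

Definition row_stochastic (p : fr) := forall u, \sum_k p u k = 1.

Definition set_at (x : pt) (a : 'I_r) : pt :=
  [ffun k => if k == i then a else x k].

Definition exchange_at (xy : pt * pt) : pt * pt :=
  (set_at xy.1 (xy.2 i), set_at xy.2 (xy.1 i)).

Definition pair_prob (p : fr) (xy : pt * pt) : R :=
  sample_prob p xy.1 * sample_prob p xy.2.

Definition hits (x : pt) : R := (x i == j)%:R.

Lemma set_at_eq x a : set_at x a i = a.
Proof. by rewrite ffunE eqxx. Qed.

Lemma set_at_id x : set_at x (x i) = x.
Proof. by apply/ffunP => k; rewrite ffunE; case: eqP => [->|]. Qed.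

Lemma set_atK x a b : set_at (set_at x a) b = set_at x b.
Proof. by apply/ffunP => k; rewrite !ffunE; case: eqP. Qed.

Lemma exchange_atK : involutive exchange_at.
Proof. by case=> x y; rewrite /exchange_at /= !set_at_eq !set_atK !set_at_id. Qed.

Lemma sample_prob_at p x :
  sample_prob p x = p i (x i) * \prod_(k | k != i) p k (x k).
Proof. by rewrite /sample_prob (bigD1 i). Qed.

Lemma sample_prob_set_at p x a :
  sample_prob p (set_at x a) = p i a * \prod_(k | k != i) p k (x k).
Proof.
rewrite sample_prob_at set_at_eq; congr (_ * _).
by apply: eq_bigr => k /negbTE ik; rewrite ffunE ik.
Qed.

Lemma pair_prob_exchange p xy : pair_prob p (exchange_at xy) = pair_prob p xy.
Proof.
by case: xy => x y; rewrite /pair_prob /= !sample_prob_set_at !sample_prob_at; ring.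
Qed.

Lemma sample_prob_ge0 p x :
  (forall u k, 0 <= p u k) -> 0 <= sample_prob p x.
Proof. by move=> p_ge0; apply: prodr_ge0. Qed.

Lemma pair_prob_ge0 p xy : (forall u k, 0 <= p u k) -> 0 <= pair_prob p xy.
Proof. by move=> p_ge0; apply: mulr_ge0; apply: sample_prob_ge0. Qed.

Lemma sum_sample_prob p : row_stochastic p -> \sum_x sample_prob p x = 1.
Proof. by move=> p1; rewrite -bigA_distr_bigA; apply: big1 => u _; apply: p1. Qed.

Lemma sum_sample_prob_hits p :
  row_stochastic p -> \sum_x sample_prob p x * hits x = p i j.
Proof.
move=> p1; pose F u k := if u == i then p u k * (k == j)%:R else p u k.
transitivity (\sum_(x : pt) \prod_u F u (x u)).
  apply: eq_bigr => x _; rewrite sample_prob_at [in RHS](bigD1 i) //= /F eqxx /hits.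
  have -> : \prod_(u | u != i) F u (x u) = \prod_(u | u != i) p u (x u).
    by apply: eq_bigr => u /negbTE iu; rewrite /F iu.
  ring.
rewrite -bigA_distr_bigA /= (bigD1 i) //= [X in _ * X]big1 => [|u /negbTE iu];
  last first.
  by rewrite /F iu p1.
rewrite /F eqxx (bigD1 j) //= eqxx [X in _ + X]big1 => [|k /negbTE kj]; last first.
  by rewrite kj mulr0.
by rewrite !mulr1 addr0.
Qed.

Lemma sum_pair_prob p : row_stochastic p -> \sum_xy pair_prob p xy = 1.
Proof. by move=> p1; rewrite sum_pair_mul sum_sample_prob ?mulr1. Qed.

Lemma sum_pair_prob_hits_sqr p : row_stochastic p ->
  \sum_xy pair_prob p xy * (hits xy.1 - hits xy.2) ^+ 2 = 2 * (p i j * (1 - p i j)).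
Proof.
move=> p1; pose P := sample_prob p; pose Ph x := P x * hits x.
have e xy : pair_prob p xy * (hits xy.1 - hits xy.2) ^+ 2 =
    Ph xy.1 * P xy.2 + P xy.1 * Ph xy.2 - 2 * (Ph xy.1 * Ph xy.2).
  rewrite /pair_prob /Ph /hits /P.
  by case: (xy.1 i == j); case: (xy.2 i == j) => /=; ring.
rewrite (eq_bigr _ (fun xy _ => e xy)) sumrB big_split -mulr_sumr /= !sum_pair_mul.
by rewrite /Ph /P sum_sample_prob_hits // sum_sample_prob //; ring.
Qed.

Definition gain (h : pt -> R) (x y : pt) : R :=
  if h x < h y then hits y - hits x else hits x - hits y.

Definition sym_gain (h : pt -> R) (x y : pt) : R :=
  Num.sg (h x - h y) * (hits x - hits y).

Definition drift (h : pt -> R) (p : fr) : R :=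
  \sum_xy pair_prob p xy * gain h xy.1 xy.2.

Lemma gain_cases h x y : gain h x y = 0 \/ gain h x y = 1 \/ gain h x y = -1.
Proof.
rewrite /gain /hits; case: ifP => _; case: (x i == j); case: (y i == j) => /=;
  (by left; ring) || (by right; left; ring) || (by right; right; ring).
Qed.

Lemma gain_sqr h x y : gain h x y ^+ 2 = (hits x - hits y) ^+ 2.
Proof. by rewrite /gain; case: ifP => _; ring. Qed.

Lemma gain_add_swap h x y : gain h x y + gain h y x = 2 * sym_gain h x y.
Proof.
rewrite /gain /sym_gain; case: ltgtP => [lt_xy|lt_yx|->].
- by rewrite ltr0_sg ?subr_lt0 //; ring.
- by rewrite gtr0_sg ?subr_gt0 //; ring.
- by rewrite subrr sgr0; ring.
Qed.

Lemma drift_sym_gain h p :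
  drift h p = \sum_xy pair_prob p xy * sym_gain h xy.1 xy.2.
Proof.
have swapK : involutive (fun xy : pt * pt => (xy.2, xy.1)) by case.
have /= swap_eq := @sum_involutive_weighted _ _ _ (pair_prob p)
  (fun xy => gain h xy.1 xy.2) swapK (fun xy => mulrC _ _).
suff : drift h p + drift h p = 2 * \sum_xy pair_prob p xy * sym_gain h xy.1 xy.2.
  by lra.
rewrite {1}/drift -swap_eq /drift -big_split mulr_sumr /=.
by apply: eq_bigr => xy _; rewrite -mulrDr addrC gain_add_swap; ring.
Qed.

Lemma hits_set_at x a : hits (set_at x a) = (a == j)%:R.
Proof. by rewrite /hits set_at_eq. Qed.

Lemma prefers_set_at_le h x a :
  weakly_prefers h i j -> x i = j -> h (set_at x a) <= h x.
Proof.
by move=> hj xj; rewrite -{2}(set_at_id x) xj -(set_atK x a j); apply: hj.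
Qed.

Lemma neutral_set_at h x a : neutral h i -> h (set_at x a) = h x.
Proof. by move=> hi; apply: hi => k /negbTE ki; rewrite ffunE ki. Qed.

Lemma sym_gain_exchange_ge0 h xy : weakly_prefers h i j ->
  0 <= sym_gain h xy.1 xy.2 + sym_gain h (exchange_at xy).1 (exchange_at xy).2.
Proof.
case: xy => x y hj; rewrite /sym_gain /= !hits_set_at /hits.
case: (eqVneq (x i) j) => [xj|xnj]; case: (eqVneq (y i) j) => [yj|ynj].
- by rewrite !subrr !mulr0 addr0.
- have lex : h (set_at x (y i)) <= h x by apply: prefers_set_at_le.
  have ley : h y <= h (set_at y (x i)) by rewrite xj; apply: hj.
  have := ler_sgr (lerB lex ley).
  by rewrite /=; lra.
- have lex : h x <= h (set_at x (y i)) by rewrite yj; apply: hj.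
  have ley : h (set_at y (x i)) <= h y by apply: prefers_set_at_le.
  have := ler_sgr (lerB lex ley).
  by rewrite /=; lra.
- by rewrite !subrr !mulr0 addr0.
Qed.

Lemma sym_gain_exchange_neutral h xy : neutral h i ->
  sym_gain h (exchange_at xy).1 (exchange_at xy).2 = - sym_gain h xy.1 xy.2.
Proof.
case: xy => x y hi; rewrite /sym_gain /= !hits_set_at !neutral_set_at //.
by rewrite /hits; ring.
Qed.

Lemma sum_sym_gain_exchange h p :
  \sum_xy pair_prob p xy * sym_gain h (exchange_at xy).1 (exchange_at xy).2
  = \sum_xy pair_prob p xy * sym_gain h xy.1 xy.2.
Proof.
exact: (sum_involutive_weighted (fun xy => sym_gain h xy.1 xy.2) exchange_atK
  (pair_prob_exchange p)).
Qed.

Lemma drift_ge0 h p :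
  (forall u k, 0 <= p u k) -> weakly_prefers h i j -> 0 <= drift h p.
Proof.
move=> p_ge0 hj; rewrite drift_sym_gain.
suff : 0 <= \sum_xy pair_prob p xy * sym_gain h xy.1 xy.2
          + \sum_xy pair_prob p xy * sym_gain h (exchange_at xy).1 (exchange_at xy).2.
  by rewrite sum_sym_gain_exchange; lra.
rewrite -big_split /=; apply: sumr_ge0 => xy _; rewrite -mulrDr.
by apply: mulr_ge0; [apply: pair_prob_ge0 | apply: sym_gain_exchange_ge0].
Qed.

Lemma drift_neutral h p : neutral h i -> drift h p = 0.
Proof.
move=> hi; have := sum_sym_gain_exchange h p.
under eq_bigr do rewrite sym_gain_exchange_neutral // mulrN.
by rewrite sumrN drift_sym_gain; lra.
Qed.

Lemma drift_le h p :
  (forall u k, 0 <= p u k) -> row_stochastic p ->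
  drift h p <= 2 * (p i j * (1 - p i j)).
Proof.
move=> p_ge0 p1; rewrite -sum_pair_prob_hits_sqr //; apply: ler_sum => xy _.
apply: ler_wpM2l; first exact: pair_prob_ge0.
by rewrite -(gain_sqr h); case: (gain_cases h xy.1 xy.2) => [|[]] ->; lra.
Qed.

Variable N : nat.
Local Notation K := (N%:R : R).

(* The neutral chain moves v to v - 1/K and to v + 1/K, each with probability
   v(1-v): the two samples disagree on whether they hold j at position i. *)
Definition neutral_step (phi : R -> R) (v : R) : R :=
  v * (1 - v) * phi (v - K^-1) + (1 - 2 * (v * (1 - v))) * phi v
  + v * (1 - v) * phi (v + K^-1).

Definition step_mean (h : pt -> R) (p : fr) (phi : R -> R) : R :=
  \sum_xy pair_prob p xy * phi (cga_update K h p xy.1 xy.2 i j).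

Definition on_grid (v : R) := exists m : nat, v = m%:R / K.

(* Monotonicity along the grid only: unlike global monotonicity, it is
   preserved by [neutral_step]. *)
Definition grid_nonincreasing (phi : R -> R) :=
  forall k, (k < N)%N -> phi (k.+1%:R / K) <= phi (k%:R / K).

Lemma cga_update_at h p x y :
  cga_update K h p x y i j = p i j + K^-1 * gain h x y.
Proof. by rewrite /cga_update /gain /hits; case: ifP. Qed.

Lemma step_meanE h p phi : row_stochastic p ->
  2 * step_mean h p phi = 2 * neutral_step phi (p i j)
    + (phi (p i j + K^-1) - phi (p i j - K^-1)) * drift h p.
Proof.
move=> p1; set v := p i j; set up := phi (v + K^-1); set dn := phi (v - K^-1).
rewrite /step_mean mulr_sumr (eq_bigr (fun xy => 2 * phi v * pair_prob p xy
    + (up - dn) * (pair_prob p xy * gain h xy.1 xy.2)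
    + (up + dn - 2 * phi v) * (pair_prob p xy * (hits xy.1 - hits xy.2) ^+ 2))).
  rewrite !big_split /= -!mulr_sumr sum_pair_prob // sum_pair_prob_hits_sqr //.
  by rewrite /neutral_step /drift -/v -/up -/dn; ring.
move=> xy _; rewrite mulrCA cga_update_at shift_by_sign; last exact: gain_cases.
by rewrite gain_sqr -/v -/up -/dn; ring.
Qed.

Lemma step_mean_neutral h p phi : neutral h i -> row_stochastic p ->
  step_mean h p phi = neutral_step phi (p i j).
Proof.
move=> hi p1; have := step_meanE h phi p1.
by rewrite drift_neutral // mulr0 addr0; lra.
Qed.

Lemma gridS m : m.+1%:R / K = m%:R / K + K^-1.
Proof. by rewrite -addn1 natrD mulrDl mul1r. Qed.

Lemma gridSK m : m.+1%:R / K - K^-1 = m%:R / K.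
Proof. by rewrite gridS addrK. Qed.

Lemma grid_unit_interval k : (k <= N)%N -> 0 <= k%:R / K <= 1.
Proof.
move=> kN; rewrite divr_ge0 //=.
have [->|N_gt0] := posnP N; first by rewrite invr0 mulr0.
by rewrite ler_pdivrMr ?ltr0n // mul1r ler_nat.
Qed.

Lemma neutral_step_nonincreasing phi :
  grid_nonincreasing phi -> grid_nonincreasing (neutral_step phi).
Proof.
move=> phi_dec k kN; rewrite /neutral_step.
rewrite gridSK -[k%:R / K + K^-1]gridS; set v := k%:R / K; set v' := k.+1%:R / K.
have /andP [v_ge0 v_le1] : 0 <= v <= 1 by rewrite grid_unit_interval // ltnW.
have /andP [v'_ge0 v'_le1] : 0 <= v' <= 1 by rewrite grid_unit_interval.
have lower : 0 <= v * (1 - v) * (phi (v - K^-1) - phi v).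
  case: k kN @v @v' v_ge0 v_le1 v'_ge0 v'_le1 => [|k] kN v v' *.
    by rewrite /v !mul0r.
  apply: mulr_ge0; first nra.
  by rewrite subr_ge0 /v gridSK phi_dec // ltnW.
have upper : 0 <= v' * (1 - v') * (phi v' - phi (v' + K^-1)).
  case: (ltnP k.+1 N) => [k1N|Nk1].
    by apply: mulr_ge0; [nra | rewrite subr_ge0 -gridS phi_dec].
  have k1N : k.+1 = N by apply/eqP; rewrite eqn_leq kN.
  have -> : v' = 1 by rewrite /v' k1N divff // pnatr_eq0 -k1N.
  by rewrite subrr mulr0 mul0r.
have middle : 0 <= (1 - v * (1 - v) - v' * (1 - v')) * (phi v - phi v').
  by apply: mulr_ge0; [nra | rewrite subr_ge0 phi_dec].
rewrite -subr_ge0; set lhs := (X in 0 <= X).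
have -> : lhs = v * (1 - v) * (phi (v - K^-1) - phi v)
    + (1 - v * (1 - v) - v' * (1 - v')) * (phi v - phi v')
    + v' * (1 - v') * (phi v' - phi (v' + K^-1)).
  by rewrite /lhs; ring.
lra.
Qed.

Lemma grid_interior m : 0 < m%:R / K < 1 -> (0 < m < N)%N.
Proof.
case/andP=> v_gt0 v_lt1; have [N0|N_gt0] := posnP N.
  by move: v_gt0; rewrite N0 invr0 mulr0 ltxx.
move: v_gt0 v_lt1; rewrite pmulr_lgt0 ?invr_gt0 ?ltr0n // ltr_pdivrMr ?ltr0n //.
by rewrite mul1r !ltr_nat => -> ->.
Qed.

Lemma step_mean_le h p phi :
  weakly_prefers h i j -> (forall u k, 0 <= p u k) -> row_stochastic p ->
  on_grid (p i j) -> grid_nonincreasing phi ->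
  step_mean h p phi <= neutral_step phi (p i j).
Proof.
move=> hj p_ge0 p1 [m vE] phi_dec; have := step_meanE h phi p1.
suff : (phi (p i j + K^-1) - phi (p i j - K^-1)) * drift h p <= 0 by lra.
have D_ge0 := drift_ge0 p_ge0 hj; have D_le := drift_le h p_ge0 p1.
have [->|D_neq0] := eqVneq (drift h p) 0; first by rewrite mulr0.
apply: mulr_le0_ge0 => //; rewrite subr_le0.
have : (0 < m < N)%N.
  by apply: grid_interior; rewrite -vE; apply/andP; split; nra.
case: m vE => [//|m] -> /andP [_ mN].
by rewrite gridSK -gridS (le_trans (phi_dec _ mN)) // phi_dec // ltnW.
Qed.

Definition grid_stochastic (p : fr) :=
  row_stochastic p /\ forall u k, on_grid (p u k).

Lemma grid_stochastic_ge0 p : grid_stochastic p -> forall u k, 0 <= p u k.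
Proof.
case=> _ p_grid u k; have [m ->] := p_grid u k.
by rewrite divr_ge0 // ler0n.
Qed.

Lemma grid_stochastic_shift p (a b : pt) :
  grid_stochastic p -> sample_prob p b != 0 ->
  grid_stochastic (fun u k => p u k + K^-1 * ((a u == k)%:R - (b u == k)%:R)).
Proof.
move=> [p1 p_grid] b_pos; split.
  move=> u; rewrite big_split /= -mulr_sumr sumrB p1.
  by rewrite !sum_indicator subrr mulr0 addr0.
move=> u k; have [m pE] := p_grid u k; rewrite /on_grid pE.
case: (a u == k); case: (eqVneq (b u) k) => [bk|_] /=.
- by exists m; rewrite subrr mulr0 addr0.
- by exists m.+1; rewrite subr0 mulr1 gridS.
- have : p u k != 0.
    apply: contraNneq b_pos => pk0.
    by rewrite /sample_prob (bigD1 u) //= bk pk0 mul0r.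
  rewrite pE; case: m {pE} => [|m]; first by rewrite mul0r eqxx.
  by exists m; rewrite sub0r mulrN1 gridSK.
- by exists m; rewrite subrr mulr0 addr0.
Qed.

Lemma grid_stochastic_update h p x y :
  grid_stochastic p -> sample_prob p x != 0 -> sample_prob p y != 0 ->
  grid_stochastic (cga_update K h p x y).
Proof. by rewrite /cga_update; case: ifP => _ /= *; apply: grid_stochastic_shift. Qed.

Variable m0 : nat.
Hypothesis init_on_grid : (r%:R)^-1 = m0%:R / K.

Lemma grid_stochastic_init : grid_stochastic (@init_freq R n r).
Proof.
split=> [u|u k]; last by exists m0.
have r_gt0 : (0 < r)%N by case: r j => [[]|].
rewrite /init_freq sumr_const card_ord -[_ *+ r]mulr_natl.
by rewrite mulfV // pnatr_eq0 -lt0n.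
Qed.

Lemma ler_sum_cga_dist h t (F G : R * fr -> R) :
  (forall wp, 0 <= wp.1 -> (wp.1 != 0 -> grid_stochastic wp.2) -> F wp <= G wp) ->
  \sum_(wp <- cga_dist K h t) F wp <= \sum_(wp <- cga_dist K h t) G wp.
Proof.
elim: t F G => [|t IH] F G FG /=.
  by rewrite !big_seq1; apply: FG => //= _; apply: grid_stochastic_init.
rewrite !big_flatten !big_map /=; apply: IH => -[w p] /= w_ge0 wp_grid.
rewrite !big_map; apply: ler_sum => xy _; apply: FG => /=.
  have [->|/wp_grid p_grid] := eqVneq w 0; first by rewrite mul0r.
  by rewrite mulr_ge0 // (pair_prob_ge0 _ (grid_stochastic_ge0 p_grid)).
rewrite !mulf_eq0 !negb_or => /and3P [/wp_grid p_grid x_pos y_pos].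
exact: grid_stochastic_update.
Qed.

Definition cga_mean h t (phi : R -> R) : R :=
  \sum_(wp <- cga_dist K h t) wp.1 * phi (wp.2 i j).

Lemma cga_mean_succ h t phi :
  cga_mean h t.+1 phi = \sum_(wp <- cga_dist K h t) wp.1 * step_mean h wp.2 phi.
Proof.
rewrite /cga_mean /= big_flatten big_map; apply: eq_bigr => wp _.
rewrite big_map big_enum /step_mean mulr_sumr.
by apply: eq_bigr => xy _; rewrite /= -mulrA.
Qed.

Lemma cga_mean_le f g t phi : weakly_prefers f i j -> neutral g i ->
  grid_nonincreasing phi -> cga_mean f t phi <= cga_mean g t phi.
Proof.
move=> fj gi; elim: t phi => [//|t IH] phi phi_dec.
have T_dec := neutral_step_nonincreasing phi_dec.
rewrite !cga_mean_succ; apply: (le_trans _ (le_trans (IH _ T_dec) _)).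
  apply: ler_sum_cga_dist => -[w p] /= w_ge0 wp_grid.
  have [->|/wp_grid p_grid] := eqVneq w 0; first by rewrite !mul0r.
  have [p1 p_on] := p_grid; apply: ler_wpM2l => //.
  exact: step_mean_le fj (grid_stochastic_ge0 p_grid) p1 (p_on i j) phi_dec.
apply: ler_sum_cga_dist => -[w p] /= w_ge0 wp_grid.
have [->|/wp_grid [p1 _]] := eqVneq w 0; first by rewrite !mul0r.
by rewrite step_mean_neutral.
Qed.

Lemma cga_prob_le_mean h t lam :
  cga_prob_le K h t i j lam = cga_mean h t (fun v => ((v <= lam)%R)%:R).
Proof.
rewrite /cga_prob_le big_mkcond /=; apply: eq_bigr => wp _.
by case: ifP; rewrite ?mulr1 ?mulr0.
Qed.

Lemma grid_nonincreasing_le lam :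
  grid_nonincreasing (fun v => ((v <= lam)%R)%:R).
Proof.
move=> k _ /=; have [le_k1|_] := lerP (k.+1%:R / K) lam; last exact: ler0n.
by rewrite (le_trans _ le_k1) // gridS lerDl invr_ge0.
Qed.

Lemma cga_stoch_dominates f g t : weakly_prefers f i j -> neutral g i ->
  stoch_dominates_freq K f g t i j.
Proof.
move=> fj gi lam; rewrite !cga_prob_le_mean.
exact: cga_mean_le (grid_nonincreasing_le lam).
Qed.

End OnePosition.

Theorem theorem3 (R : realType) (n r : nat) (K : R)
  (f g : point n.+1 r.+2 -> R) :
  0 < K ->
  (exists m : nat, ((r.+2)%:R)^-1 = m%:R / K) ->
  weakly_prefers f ord0 ord_max ->
  neutral g ord0 ->
  forall t : nat, stoch_dominates_freq K f g t ord0 ord_max.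
Proof.
move=> K_gt0 [m initE] fj gi t.
have KE := natr_eq_of_inv_eq_div (ltn0Sn r.+1) (lt0r_neq0 K_gt0) initE.
rewrite KE in initE *.
exact: (cga_stoch_dominates (N := (m * r.+2)%N) initE t fj gi).
Qed.
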